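(* Let $G$ be a complete bisplit graph with vertex partition $X,Y,Z$. Then the sparing number of $G$ is the product of the cardinalities of the two of these three sets having minimum cardinality.
   Context: A bisplit graph is a graph whose vertex set is partitioned into three independent sets $X,Y,Z$ such that $Y\cup Z$ induces a complete bipartite subgraph; it is a complete bisplit graph if, in addition, every vertex of $X$ is adjacent to every vertex of $Y\cup Z$ (so $G$ is a complete tripartite graph with parts $X,Y,Z$). Let $\mathbb{N}_0$ be the set of non-negative integers; for $A,B\subseteq\mathbb{N}_0$, $A+B=\{a+b:a\in A,b\in B\}$. An integer additive set-indexer (IASI) of a graph $G$ is an injective map $f:V(G)\to\mathcal{P}(\mathbb{N}_0)$ such that $f^+:E(G)\to\mathcal{P}(\mathbb{N}_0)$, $f^+(uv)=f(u)+f(v)$, is injective. A weak IASI is an IASI with $|f^+(uv)|=\max(|f(u)|,|f(v)|)$ for every edge $uv$. An edge $e$ is mono-indexed if $|f^+(e)|=1$. The sparing number $\varphi(G)$ is the minimum number of mono-indexed edges over all weak IASIs of $G$. *)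

From mathcomp Require Import all_boot all_order.
From mathcomp Require Import finmap.
Set Implicit Arguments.
Unset Strict Implicit.
Unset Printing Implicit Defensive.

Definition sumset (A B : {fset nat}) : {fset nat} :=
  [fset (a + b)%N | a in A, b in B]%fset.

Section Graphs.
Variable T : finType.

Definition simple_graph (e : rel T) : Prop :=
  symmetric e /\ irreflexive e.

Definition edges (e : rel T) : {set {set T}} :=
  [set E : {set T} | [exists u, exists v, e u v && (E == [set u; v])]].

Definition independent (e : rel T) (S : {set T}) : Prop :=
  forall u v, u \in S -> v \in S -> ~~ e u v.

Definition complete_bisplit (e : rel T) (X Y Z : {set T}) : Prop :=
  [/\ [&& [disjoint X & Y], [disjoint X & Z] & [disjoint Y & Z]],
      X :|: Y :|: Z = setT,
      independent e X /\ independent e Y /\ independent e Z,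
      (forall y z, y \in Y -> z \in Z -> e y z) &
      (forall x w, x \in X -> w \in Y :|: Z -> e x w)].

Definition IASI (e : rel T) (f : T -> {fset nat}) : Prop :=
  injective f /\
  forall u v u' v', e u v -> e u' v' ->
    sumset (f u) (f v) = sumset (f u') (f v') -> [set u; v] = [set u'; v'].

Definition weak_IASI (e : rel T) (f : T -> {fset nat}) : Prop :=
  IASI e f /\
  forall u v, e u v -> #|` sumset (f u) (f v)| = maxn #|` f u| #|` f v|.

Definition mono_count (e : rel T) (f : T -> {fset nat}) : nat :=
  #|[set E in edges e |
      [exists u, exists v,
        [&& E == [set u; v], e u v & #|` sumset (f u) (f v)| == 1]]]|.

Definition is_sparing_number (e : rel T) (k : nat) : Prop :=
  (exists f, weak_IASI e f /\ mono_count e f = k) /\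
  (forall f, weak_IASI e f -> k <= mono_count e f).

End Graphs.

Definition prod_two_smallest (a b c : nat) : nat :=
  let s := sort leq [:: a; b; c] in nth 0 s 0 * nth 0 s 1.

From mathcomp Require Import all_boot all_order.
From mathcomp Require Import finmap zify.

(* In a weak IASI, an edge whose two labels both have at least two elements would
   get a sumset strictly larger than either label; hence the vertices carrying
   non-singleton labels form an independent set and lie in one part of the complete
   tripartite graph.  All edges between the two other parts join singleton labels
   and are mono-indexed, so at least the product of two part sizes is spared.
   Conversely, label the vertices of one part by {2^r, 2^r + 1} and all others by
   {2^r}, with r an injective rank: only the edges between the other two parts are
   mono-indexed, and the least element 2^r(u) + 2^r(v) of an edge label determines
   the edge by uniqueness of binary expansions. *)

Set Implicit Arguments.
Unset Strict Implicit.
Unset Printing Implicit Defensive.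

Lemma trunc_log2_add_pow2 i j : i < j -> trunc_log 2 (2 ^ i + 2 ^ j) = j.
Proof.
move=> ij; apply: trunc_log_eq => //; rewrite expnS.
have := ltn_exp2l i j (isT : 1 < 2); rewrite ij; lia.
Qed.
Arguments trunc_log2_add_pow2 {i j}.

Lemma add_pow2_inj i j k l : i != j -> k != l -> 2 ^ i + 2 ^ j = 2 ^ k + 2 ^ l ->
  (i = k /\ j = l) \/ (i = l /\ j = k).
Proof.
have sorted_case i' j' k' l' : i' < j' -> k' < l' ->
    2 ^ i' + 2 ^ j' = 2 ^ k' + 2 ^ l' -> i' = k' /\ j' = l'.
  move=> ij kl E; have jl : j' = l'.
    by rewrite -(trunc_log2_add_pow2 ij) -(trunc_log2_add_pow2 kl) E.
  by split => //; apply: (@expnI 2) => //; move: E; rewrite jl => /addIn.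
case: ltngtP => // ij _; case: ltngtP => // kl _ E.
- by left; apply: sorted_case.
- by right; apply: sorted_case; rewrite // E addnC.
- by right; apply/and_comm/sorted_case; rewrite // addnC E.
- by left; apply/and_comm/sorted_case; rewrite // addnC E addnC.
Qed.

Lemma prod_two_smallestE a b c : prod_two_smallest a b c =
  if (a <= c) && (b <= c) then a * b else if a <= b then a * c else b * c.
Proof.
rewrite /prod_two_smallest /sort /=.
by case: (leqP a b) => /= ab; case: (leqP b c) => /= bc; case: (leqP a c) => /= ac;
  lia.
Qed.

Lemma prod_two_smallest_le a b c : [/\ prod_two_smallest a b c <= b * c,
  prod_two_smallest a b c <= a * c & prod_two_smallest a b c <= a * b].
Proof.
rewrite prod_two_smallestE.
by case: (leqP a c) => ac; case: (leqP b c) => bc; case: (leqP a b) => ab /=;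
  split; nia.
Qed.

Lemma prod_two_smallest_cases a b c : [\/ prod_two_smallest a b c = b * c,
  prod_two_smallest a b c = a * c | prod_two_smallest a b c = a * b].
Proof.
rewrite prod_two_smallestE.
by case: ifP => _; [apply: Or33 | case: ifP => _; [apply: Or32 | apply: Or31]].
Qed.

Local Open Scope fset_scope.

Lemma sumsetP (A B : {fset nat}) x :
  reflect (exists a b, [/\ a \in A, b \in B & x = a + b]%N) (x \in sumset A B).
Proof.
apply: (iffP (imfset2P _ _ _ _ _)).
  by move=> [a aA [b bB ->]]; exists a, b.
by move=> [a [b [aA bB ->]]]; exists a => //; exists b.
Qed.

Lemma sumsetC (A B : {fset nat}) : sumset A B = sumset B A.
Proof.
by apply/fsetP => x; apply/sumsetP/sumsetP => -[a [b [aA bB ->]]];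
  exists b, a; rewrite addnC.
Qed.

Lemma sumset0 (A : {fset nat}) : sumset A fset0 = fset0.
Proof. by apply/fsetP => x; rewrite in_fset0; apply/sumsetP => -[a [b []]]. Qed.

Lemma shift_sub_sumset (A B : {fset nat}) b :
  b \in B -> [fset (a + b)%N | a in A] `<=` sumset A B.
Proof.
by move=> bB; apply/fsubsetP => _ /imfsetP [a aA ->]; apply/sumsetP; exists a, b.
Qed.

Lemma card_shift (A : {fset nat}) b : #|` [fset (a + b)%N | a in A]| = #|` A|.
Proof. by rewrite card_imfset //= => x y /addIn. Qed.

Lemma sumset_fset1 (B : {fset nat}) a : sumset B [fset a] = [fset (b + a)%N | b in B].
Proof.
apply/eqP; rewrite eqEfsubset shift_sub_sumset ?fset11 // andbT.
by apply/fsubsetP => _ /sumsetP [b [a' [bB /fset1P -> ->]]]; apply/imfsetP; exists b.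
Qed.

Lemma card_sumset1 a (B : {fset nat}) : #|` sumset [fset a] B| = #|` B|.
Proof. by rewrite sumsetC sumset_fset1 card_shift. Qed.

Lemma fset_nat_max {A : {fset nat}} :
  A != fset0 -> exists2 m, m \in A & forall a, a \in A -> a <= m.
Proof.
case/fset0Pn => a0 a0A.
case: (@arg_maxnP A [` a0A] xpredT val isT) => /= m _ mM.
by exists (val m) => [|a aA]; [exact: fsvalP | exact: (mM [` aA])].
Qed.

Lemma card_sumset_gt {A B : {fset nat}} :
  A != fset0 -> 1 < #|` B| -> #|` A| < #|` sumset A B|.
Proof.
move=> A0 B2.
have [b1 [b2 [b1B b2B b12]]] : exists b1 b2, [/\ b1 \in B, b2 \in B & b1 < b2].
  have /fset0Pn [b bB] : B != fset0 by rewrite -cardfs_gt0 ltnW.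
  have /fset0Pn [b' /fsetD1P [b'b b'B]] : B `\ b != fset0.
    by rewrite -cardfs_gt0; move: B2; rewrite (cardfsD1 b B) bB.
  by case: (ltngtP b b') b'b => // ? _; [exists b, b' | exists b', b].
have [m mA mM] := fset_nat_max A0.
have notin : (m + b2)%N \notin [fset (a + b1)%N | a in A].
  by apply/imfsetP => -[a /mM aA]; lia.
have sub : (m + b2)%N |` [fset (a + b1)%N | a in A] `<=` sumset A B.
  rewrite fsubUset shift_sub_sumset // fsub1set andbT.
  by apply/sumsetP; exists m, b2.
by have := fsubset_leq_card sub; rewrite cardfsU1 notin card_shift.
Qed.

Definition is_least (A : {fset nat}) (a : nat) : Prop :=
  a \in A /\ forall x, x \in A -> a <= x.

Lemma is_least_unique (A : {fset nat}) a b : is_least A a -> is_least A b -> a = b.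
Proof. by move=> [aA aM] [bA bM]; apply/eqP; rewrite eqn_leq aM ?bM. Qed.

Lemma is_least_sumset (A B : {fset nat}) a b :
  is_least A a -> is_least B b -> is_least (sumset A B) (a + b).
Proof.
move=> [aA aM] [bB bM]; split; first by apply/sumsetP; exists a, b.
by move=> _ /sumsetP [x [y [/aM xA /bM yB ->]]]; rewrite leq_add.
Qed.

Section WeakIASI.
Variables (T : finType) (e : rel T) (f : T -> {fset nat}).
Hypotheses (e_sym : symmetric e) (e_irr : irreflexive e) (f_weak : weak_IASI e f).

Lemma weak_IASI_label_neq0 {u v} : e u v -> f u != fset0.
Proof.
move=> euv; apply/negP => /eqP fu0.
have := f_weak.2 u v euv; rewrite fu0 sumsetC sumset0 cardfs0 max0n.
move/esym/cardfs0_eq; rewrite -fu0 => /f_weak.1.1 uv.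
by move: euv; rewrite uv e_irr.
Qed.

Lemma weak_IASI_edge_singleton u v : e u v -> #|` f u| = 1 \/ #|` f v| = 1.
Proof.
move=> euv; have fu0 := weak_IASI_label_neq0 euv.
have fv0 : f v != fset0 by apply: (weak_IASI_label_neq0 (_ : e v u)); rewrite e_sym.
have gt_u : 1 < #|` f v| -> #|` f u| < #|` sumset (f u) (f v)|.
  exact: card_sumset_gt.
have gt_v : 1 < #|` f u| -> #|` f v| < #|` sumset (f u) (f v)|.
  by rewrite sumsetC; apply: card_sumset_gt.
have := f_weak.2 u v euv; rewrite -!cardfs_gt0 in fu0 fv0; lia.
Qed.

End WeakIASI.

Local Close Scope fset_scope.

Section CrossEdges.
Variables (T : finType) (e : rel T).

Definition mono_edges (f : T -> {fset nat}) : {set {set T}} :=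
  [set E in edges e | [exists u, exists v,
     [&& E == [set u; v], e u v & #|` sumset (f u) (f v)| == 1]]].

Lemma mono_countE f : mono_count e f = #|mono_edges f|.
Proof. by []. Qed.

Definition complete_between (A B : {set T}) : Prop :=
  forall a b, a \in A -> b \in B -> e a b.

Definition cross_edges (A B : {set T}) : {set {set T}} :=
  [set [set ab.1; ab.2] | ab in setX A B].

Lemma card_cross_edges (A B : {set T}) :
  [disjoint A & B] -> #|cross_edges A B| = #|A| * #|B|.
Proof.
move=> dAB; rewrite card_in_imset ?cardsX // => -[a b] [a' b'].
rewrite !in_setX /= => /andP[aA bB] /andP[a'A b'B] E.
have notAB x : x \in A -> x \in B -> False by move=> xA; rewrite (disjointFr dAB xA).
have : a \in [set a'; b'] by rewrite -E set21.
have : b \in [set a'; b'] by rewrite -E set22.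
rewrite !inE => /orP[] /eqP b_eq /orP[] /eqP a_eq.
- by case: (notAB a'); rewrite // -b_eq.
- by case: (notAB a'); rewrite // -b_eq.
- by rewrite a_eq b_eq.
- by case: (notAB a); rewrite // a_eq.
Qed.

Lemma cross_edges_sub_mono f (A B : {set T}) : complete_between A B ->
    (forall a b, a \in A -> b \in B -> #|` sumset (f a) (f b)| = 1) ->
  cross_edges A B \subset mono_edges f.
Proof.
move=> eAB mono; apply/subsetP => E /imsetP [[a b]]; rewrite in_setX => /andP[aA bB] ->.
have eab := eAB a b aA bB.
by rewrite !inE; apply/andP; split; apply/existsP; exists a; apply/existsP; exists b;
  rewrite eab eqxx ?mono ?eqxx.
Qed.

Lemma mono_count_ge_cross f (A B : {set T}) :
    [disjoint A & B] -> complete_between A B ->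
    (forall v, v \in A :|: B -> #|` f v| = 1) ->
  #|A| * #|B| <= mono_count e f.
Proof.
move=> dAB eAB single; rewrite mono_countE -card_cross_edges //.
apply/subset_leq_card/cross_edges_sub_mono => // a b aA bB.
have /cardfs1P [x ->] : #|` f a| == 1 by rewrite single // inE aA.
by rewrite card_sumset1 single // inE bB orbT.
Qed.

End CrossEdges.

Section Tripartite.
Variables (T : finType) (e : rel T).
Hypotheses (e_sym : symmetric e) (e_irr : irreflexive e).

Definition complete_tripartite (P Q R : {set T}) : Prop :=
  [/\ [&& [disjoint P & Q], [disjoint P & R] & [disjoint Q & R]],
      P :|: Q :|: R = setT,
      [/\ independent e P, independent e Q & independent e R],
      complete_between e P Q /\ complete_between e P R &
      complete_between e Q R].

Lemma complete_between_sym (A B : {set T}) :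
  complete_between e A B -> complete_between e B A.
Proof. by move=> eAB b a bB aA; rewrite e_sym eAB. Qed.

Lemma complete_tripartiteC12 P Q R :
  complete_tripartite P Q R -> complete_tripartite Q P R.
Proof.
case=> /and3P[dPQ dPR dQR] cover [iP iQ iR] [ePQ ePR] eQR; split => //.
- by rewrite disjoint_sym dPQ dQR dPR.
- by rewrite (setUC Q).
- by split; first exact: complete_between_sym.
Qed.

Lemma complete_tripartiteC23 P Q R :
  complete_tripartite P Q R -> complete_tripartite P R Q.
Proof.
case=> /and3P[dPQ dPR dQR] cover [iP iQ iR] [ePQ ePR] eQR; split => //.
- by rewrite dPR dPQ disjoint_sym.
- by rewrite -setUA (setUC R) setUA.
- exact: complete_between_sym.
Qed.

Lemma complete_bisplit_tripartite X Y Z :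
  complete_bisplit e X Y Z -> complete_tripartite X Y Z.
Proof.
case=> disj cover [iX [iY iZ]] eYZ eX; split => //; split.
- by move=> x y xX yY; apply: eX; rewrite // inE yY.
- by move=> x z xX zZ; apply: eX; rewrite // inE zZ orbT.
Qed.

Lemma mono_count_ge_tripartite P Q R f :
  complete_tripartite P Q R -> weak_IASI e f ->
  [\/ #|Q| * #|R| <= mono_count e f, #|P| * #|R| <= mono_count e f
    | #|P| * #|Q| <= mono_count e f].
Proof.
move=> tri f_weak; have [/and3P[dPQ dPR dQR] _ _ [ePQ ePR] eQR] := tri.
have single := weak_IASI_edge_singleton e_sym e_irr f_weak.
case: (boolP [forall v in Q :|: R, #|` f v| == 1]) => [/forall_inP QR1|].
  by apply: Or31; apply: mono_count_ge_cross => // v /QR1/eqP.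
rewrite negb_forall_in => /exists_inP [w]; rewrite inE => /orP[wQ|wR] /eqP w_big.
- apply: Or32; apply: mono_count_ge_cross => // v; rewrite inE => /orP[vP|vR].
  + by case: (single _ _ (ePQ v w vP wQ)).
  + by case: (single _ _ (eQR w v wQ vR)).
- apply: Or33; apply: mono_count_ge_cross => // v; rewrite inE => /orP[vP|vQ].
  + by case: (single _ _ (ePR v w vP wR)).
  + by case: (single _ _ (eQR v w vQ wR)).
Qed.

End Tripartite.

Section SpreadLabel.
Variables (T : finType) (e : rel T) (P : {set T}).
Hypotheses (e_irr : irreflexive e) (P_indep : independent e P).

Definition spread_label (v : T) : {fset nat} :=
  if v \in P then [fset 2 ^ enum_rank v; (2 ^ enum_rank v).+1]%fset
  else [fset 2 ^ enum_rank v]%fset.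

Lemma spread_label_out v : v \notin P -> spread_label v = [fset 2 ^ enum_rank v]%fset.
Proof. by rewrite /spread_label => /negbTE ->. Qed.

Lemma card_spread_label v : #|` spread_label v| = (v \in P).+1.
Proof. by rewrite /spread_label; case: (v \in P); rewrite ?cardfs2 ?cardfs1 ?ltn_eqF. Qed.

Lemma spread_label_least v : is_least (spread_label v) (2 ^ enum_rank v).
Proof.
rewrite /spread_label; case: (v \in P); split; rewrite ?inE ?eqxx //.
  by move=> x; rewrite !inE => /orP[] /eqP ->.
by move=> x; rewrite inE => /eqP ->.
Qed.

Lemma card_sumset_spread u v : e u v ->
  #|` sumset (spread_label u) (spread_label v)| = ((u \in P) || (v \in P)).+1.
Proof.
move=> euv; case: (boolP (u \in P)) => uP; last first.
  by rewrite spread_label_out // card_sumset1 card_spread_label.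
have vP : v \notin P by apply: contraL euv => vP; apply: P_indep.
by rewrite sumsetC (spread_label_out vP) card_sumset1 card_spread_label uP.
Qed.

Lemma spread_label_weak_IASI : weak_IASI e spread_label.
Proof.
have rank_inj : injective (fun v : T => nat_of_ord (enum_rank v)).
  by move=> u v /ord_inj /enum_rank_inj.
have rank_neq u v : e u v -> enum_rank u != enum_rank v :> nat.
  by apply: contraTneq => /rank_inj ->; rewrite e_irr.
split; [split|].
- move=> u v fuv; apply/rank_inj/(@expnI 2) => //; apply: is_least_unique.
    exact: spread_label_least.
  by rewrite fuv; apply: spread_label_least.
- move=> u v u' v' euv eu'v' fuv.
  have least_sum a b := is_least_sumset (spread_label_least a) (spread_label_least b).
  have /add_pow2_inj :
      2 ^ enum_rank u + 2 ^ enum_rank v = 2 ^ enum_rank u' + 2 ^ enum_rank v'.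
    by apply: is_least_unique (least_sum u v) _; rewrite fuv; apply: least_sum.
  case/(_ (rank_neq _ _ euv) (rank_neq _ _ eu'v')) => -[/rank_inj -> /rank_inj ->] //.
  exact: setUC.
- move=> u v euv; rewrite card_sumset_spread // !card_spread_label.
  by case: (u \in P); case: (v \in P).
Qed.

End SpreadLabel.

Lemma mono_edges_spread (T : finType) (e : rel T) (P Q R : {set T}) :
  complete_tripartite e P Q R -> mono_edges e (spread_label P) = cross_edges Q R.
Proof.
move=> tri; have [/and3P[dPQ dPR dQR] cover [iP iQ iR] _ eQR] := tri.
have QR_notP v : v \in Q :|: R -> v \notin P.
  by rewrite inE => /orP[] vX; [rewrite (disjointFl dPQ) | rewrite (disjointFl dPR)].
have notP_QR v : v \notin P -> v \in Q :|: R.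
  move=> vP; have : v \in P :|: Q :|: R by rewrite cover inE.
  by rewrite -setUA inE (negbTE vP).
apply/eqP; rewrite eqEsubset; apply/andP; split.
  apply/subsetP => E; rewrite inE => /andP[_ /existsP [u /existsP [v]]].
  case/and3P => /eqP -> euv mono.
  have /andP[/notP_QR uQR /notP_QR vQR] : (u \notin P) && (v \notin P).
    by move: mono; rewrite (card_sumset_spread iP euv); case: (u \in P); case: (v \in P).
  move: uQR vQR; rewrite !inE => /orP[] uX /orP[] vX.
  - by move: (iQ u v uX vX); rewrite euv.
  - by apply/imsetP; exists (u, v); rewrite // in_setX uX vX.
  - by apply/imsetP; exists (v, u); rewrite ?in_setX ?uX ?vX // setUC.
  - by move: (iR u v uX vX); rewrite euv.
apply: cross_edges_sub_mono => // q r qQ rR.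
rewrite (card_sumset_spread iP (eQR q r qQ rR)).
by rewrite !(negbTE (QR_notP _ _)) // inE ?qQ ?rR ?orbT.
Qed.

Lemma spread_label_tripartite (T : finType) (e : rel T) (P Q R : {set T}) :
  irreflexive e -> complete_tripartite e P Q R ->
  exists f, weak_IASI e f /\ mono_count e f = #|Q| * #|R|.
Proof.
move=> e_irr tri; have [/and3P[_ _ dQR] _ [iP _ _] _ _] := tri.
exists (spread_label P); split; first exact: spread_label_weak_IASI.
by rewrite mono_countE (mono_edges_spread tri) card_cross_edges.
Qed.

Theorem proposition2p9 (T : finType) (e : rel T) (X Y Z : {set T}) :
  simple_graph e -> complete_bisplit e X Y Z ->
  is_sparing_number e (prod_two_smallest #|X| #|Y| #|Z|).
Proof.
move=> [e_sym e_irr] /complete_bisplit_tripartite tri.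
have [le_YZ le_XZ le_XY] := prod_two_smallest_le #|X| #|Y| #|Z|.
split.
  case: (prod_two_smallest_cases #|X| #|Y| #|Z|) => ->.
  - exact: spread_label_tripartite e_irr tri.
  - exact: spread_label_tripartite e_irr (complete_tripartiteC12 e_sym tri).
  - exact: spread_label_tripartite e_irr
      (complete_tripartiteC12 e_sym (complete_tripartiteC23 e_sym tri)).
move=> f f_weak.
by case: (mono_count_ge_tripartite e_sym e_irr tri f_weak); apply: leq_trans.
Qed.
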